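(* Let $(\Omega,\Sigma,\mathcal{M},\mathcal{F},\mathcal{T})$ be a regular vague membership space whose strong negation is $N(x)=1-x$. Then for any $p,q\in\Omega$ with $p\neq q$, it is not the case that both $\mathcal{M}(p)>0.5$ and $\mathcal{M}(q)>0.5$.
   Context: A t-norm is a commutative, associative binary operation $\otimes$ on $[0,1]$ that is nondecreasing in each argument and satisfies $x\otimes 1=x$; a t-conorm $\oplus$ satisfies the same conditions except that $x\oplus 0=x$. A strong negation is a continuous, strictly decreasing map $N:[0,1]\to[0,1]$ with $N(0)=1$, $N(1)=0$ and $N(N(x))=x$. For a sequence $(a_n)$ in $[0,1]$, $\bigoplus_{n=1}^\infty a_n:=\lim_{m\to\infty}(a_1\oplus\cdots\oplus a_m)$ and $\bigotimes_{n=1}^\infty a_n:=\lim_{m\to\infty}(a_1\otimes\cdots\otimes a_m)$ (monotone limits); for an arbitrary family $(a_i)_{i\in I}$, $\bigoplus_{i\in I}a_i:=\sup\{\bigoplus_{i\in J}a_i: J\subseteq I \text{ finite}\}$, the empty $\oplus$ being $0$. A vague membership space $(\Omega,\Sigma,\mathcal{M},\mathcal{F},\mathcal{T})$ consists of: a nonempty set $\Omega$ (elementary vague attributes); two symbols $\bot,\top\notin\Omega$; the set $\Sigma$ of formal terms generated from $\Omega\cup\{\bot,\top\}$ by a unary operation $\neg$, binary operations $\veebar,\barwedge$ and countable operations $\veebar_{n=1}^\infty,\barwedge_{n=1}^\infty$ (here $\mathcal{F}=\{\bot,\top,\neg,\barwedge,\veebar\}$), where a finite join $A_1\veebar\cdots\veebar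 A_n$ is identified with the countable join of the sequence $A_1,\dots,A_n,\bot,\bot,\dots$ and a finite meet $A_1\barwedge\cdots\barwedge A_n$ with the countable meet of $A_1,\dots,A_n,\top,\top,\dots$; a triple $\mathcal{T}=\{N,\oplus,\otimes\}$ of a strong negation $N$, a t-norm $\otimes$ and a t-conorm $\oplus$ that are $N$-dual, i.e. $x\oplus y=N(N(x)\otimes N(y))$; and a map $\mathcal{M}:\Sigma\to[0,1]$ satisfying (I) there is $p\in\Omega$ with $\mathcal{M}(p)>0$, and if $\mathcal{M}(p_0)=1$ for some $p_0\in\Omega$ then $\mathcal{M}(p)=0$ for all $p\in\Omega\setminus\{p_0\}$; (II) $\mathcal{M}(\bot)=0$, $\mathcal{M}(\top)=1$; (III) $\mathcal{M}(\neg A)\le N(\mathcal{M}(A))$ for all $A\in\Sigma$; (IV) for every sequence $A_1,A_2,\dots\in\Sigma$, $\mathcal{M}(\veebar_{n=1}^\infty A_n)=\bigoplus_{n=1}^\infty\mathcal{M}(A_n)$ and $\mathcal{M}(\barwedge_{n=1}^\infty A_n)=\bigotimes_{n=1}^\infty\mathcal{M}(A_n)$; (V) for every $p\in\Omega$, $\mathcal{M}(\neg p)\ge\bigoplus_{q\in\Omega\setminus\{p\}}\mathcal{M}(q)$. The space is called regular if $\mathcal{M}(\neg A)=N(\mathcal{M}(A))$ for all $A\in\Sigma$. *)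

From Stdlib Require Import Reals List.
Open Scope R_scope.

(* Formal terms Sigma over the elementary attributes O. Finite joins/meets are
   identified with countable ones padded by bot/top (see join2/meet2). *)
Inductive term (O : Type) : Type :=
| atom : O -> term O
| tbot : term O
| ttop : term O
| tneg : term O -> term O
| tjoin : (nat -> term O) -> term O
| tmeet : (nat -> term O) -> term O.
Arguments atom {O} _.
Arguments tbot {O}.
Arguments ttop {O}.
Arguments tneg {O} _.
Arguments tjoin {O} _.
Arguments tmeet {O} _.

Definition join2 {O} (A B : term O) : term O :=
  tjoin (fun n => match n with 0 => A | 1 => B | _ => tbot end).
Definition meet2 {O} (A B : term O) : term O :=
  tmeet (fun n => match n with 0 => A | 1 => B | _ => ttop end).

Definition in01 (x : R) : Prop := 0 <= x <= 1.

Record is_tnorm (T : R -> R -> R) : Prop := {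
  tn_closed : forall x y, in01 x -> in01 y -> in01 (T x y);
  tn_comm : forall x y, in01 x -> in01 y -> T x y = T y x;
  tn_assoc : forall x y z, in01 x -> in01 y -> in01 z -> T x (T y z) = T (T x y) z;
  tn_mono_l : forall x y z, in01 x -> in01 y -> in01 z -> x <= y -> T x z <= T y z;
  tn_mono_r : forall x y z, in01 x -> in01 y -> in01 z -> y <= z -> T x y <= T x z;
  tn_unit : forall x, in01 x -> T x 1 = x }.

Record is_tconorm (S : R -> R -> R) : Prop := {
  tc_closed : forall x y, in01 x -> in01 y -> in01 (S x y);
  tc_comm : forall x y, in01 x -> in01 y -> S x y = S y x;
  tc_assoc : forall x y z, in01 x -> in01 y -> in01 z -> S x (S y z) = S (S x y) z;
  tc_mono_l : forall x y z, in01 x -> in01 y -> in01 z -> x <= y -> S x z <= S y z;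
  tc_mono_r : forall x y z, in01 x -> in01 y -> in01 z -> y <= z -> S x y <= S x z;
  tc_unit : forall x, in01 x -> S x 0 = x }.

Record is_strong_negation (N : R -> R) : Prop := {
  sn_closed : forall x, in01 x -> in01 (N x);
  sn_cont : forall x, in01 x -> forall eps, eps > 0 ->
      exists delta, delta > 0 /\
        forall y, in01 y -> Rabs (y - x) < delta -> Rabs (N y - N x) < eps;
  sn_strict_decr : forall x y, in01 x -> in01 y -> x < y -> N y < N x;
  sn_0 : N 0 = 1;
  sn_1 : N 1 = 0;
  sn_invol : forall x, in01 x -> N (N x) = x }.

Fixpoint fold_seq (op : R -> R -> R) (e : R) (a : nat -> R) (m : nat) : R :=
  match m with
  | 0%nat => e
  | S k => op (fold_seq op e a k) (a k)
  end.

(* values of the finite joins  (+)_{i in J} a_i  over finite J subset of {x | P x};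
   a finite subset is given by a duplicate-free list; empty join is 0 *)
Definition finite_joins {O : Type} (S : R -> R -> R) (a : O -> R) (P : O -> Prop)
  (v : R) : Prop :=
  exists l : list O, NoDup l /\ Forall P l /\
    v = fold_right (fun x acc => S (a x) acc) 0 l.

Record vague_membership_space {O : Type} (M : term O -> R) (N : R -> R)
  (S T : R -> R -> R) : Prop := {
  vms_neg : is_strong_negation N;
  vms_tnorm : is_tnorm T;
  vms_tconorm : is_tconorm S;
  vms_dual : forall x y, in01 x -> in01 y -> S x y = N (T (N x) (N y));
  vms_range : forall A, in01 (M A);
  vms_I_pos : exists p : O, M (atom p) > 0;
  vms_I_one : forall p0 : O, M (atom p0) = 1 -> forall p, p <> p0 -> M (atom p) = 0;
  vms_II_bot : M tbot = 0;
  vms_II_top : M ttop = 1;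
  vms_III : forall A, M (tneg A) <= N (M A);
  vms_IV_join : forall A : nat -> term O,
      Un_cv (fold_seq S 0 (fun n => M (A n))) (M (tjoin A));
  vms_IV_meet : forall A : nat -> term O,
      Un_cv (fold_seq T 1 (fun n => M (A n))) (M (tmeet A));
  vms_V : forall (p : O) (l : R),
      is_lub (finite_joins S (fun q => M (atom q)) (fun q => q <> p)) l ->
      M (tneg (atom p)) >= l }.

Definition regular {O : Type} (M : term O -> R) (N : R -> R) : Prop :=
  forall A : term O, M (tneg A) = N (M A).

(* Axiom (V) bounds M(neg p) below by the supremum of the finite joins of the
   other atoms, hence by M(q) for every q <> p.  Regularity with N(x) = 1 - x
   turns this into M(p) + M(q) <= 1, which two memberships above 1/2 violate. *)
From Stdlib Require Import Reals List Lra.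
Open Scope R_scope.

Lemma finite_joins_in01 {O : Type} (S : R -> R -> R) (a : O -> R) (P : O -> Prop)
  (v : R) :
  is_tconorm S -> (forall x, in01 (a x)) -> finite_joins S a P v -> in01 v.
Proof.
  intros HS Ha [l [_ [_ ->]]].
  induction l as [|x l IH]; simpl.
  - unfold in01; lra.
  - apply (tc_closed S HS); auto.
Qed.

Lemma finite_joins_single {O : Type} (S : R -> R -> R) (a : O -> R) (P : O -> Prop)
  (x : O) :
  is_tconorm S -> in01 (a x) -> P x -> finite_joins S a P (a x).
Proof.
  intros HS Hax HPx.
  exists (x :: nil); split; [|split].
  - constructor; [intros []|constructor].
  - constructor; [exact HPx|constructor].
  - simpl; symmetry; exact (tc_unit S HS _ Hax).
Qed.

Lemma vms_neg_atom_ge {O : Type} (M : term O -> R) (N : R -> R) (S T : R -> R -> R)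
  (p q : O) :
  vague_membership_space M N S T -> q <> p -> M (atom q) <= M (tneg (atom p)).
Proof.
  intros H Hqp.
  set (E := finite_joins S (fun r => M (atom r)) (fun r => r <> p)).
  pose proof (vms_tconorm _ _ _ _ H) as HS.
  pose proof (vms_range _ _ _ _ H) as Hrange.
  assert (Hq : E (M (atom q))) by exact (finite_joins_single S _ _ q HS (Hrange _) Hqp).
  assert (Hbound : bound E).
  { exists 1; intros v Hv.
    destruct (finite_joins_in01 S _ _ v HS (fun r => Hrange _) Hv); lra. }
  destruct (completeness E Hbound (ex_intro _ _ Hq)) as [l Hl].
  pose proof (vms_V _ _ _ _ H p l Hl) as HV.
  destruct Hl as [Hub _]; specialize (Hub _ Hq); lra.
Qed.

Theorem proposition5p6 (O : Type) (M : term O -> R) (S T : R -> R -> R) :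
  vague_membership_space M (fun x => 1 - x) S T ->
  regular M (fun x => 1 - x) ->
  forall p q : O, p <> q -> ~ (M (atom p) > 1/2 /\ M (atom q) > 1/2).
Proof.
  intros H Hreg p q Hpq [Hp Hq].
  pose proof (vms_neg_atom_ge M _ S T p q H (not_eq_sym Hpq)) as Hge.
  rewrite Hreg in Hge; lra.
Qed.
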